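(* Let $T$ be the weighted shift on $\ell^2$ associated to a bounded complex sequence $(a_j)_{j\ge1}$. If both $T$ and its Aluthge transform $\Delta(T)$ are $2$-isometries, then $T$ is an isometry, and in particular $T=\Delta(T)=M(T)$.
   Context: $\ell^2$ has canonical basis $(e_j)_{j\ge1}$; the weighted shift associated to $(a_j)$ is the operator with $Te_j=a_je_{j+1}$. For $T\in B(H)$ with polar decomposition $T=V|T|$ ($|T|=(T^*T)^{1/2}$, $V$ the partial isometry with $\ker V=\ker T$), the Aluthge transform is $\Delta(T)=|T|^{1/2}V|T|^{1/2}$ and the mean transform is $M(T)=\frac12(|T|V+V|T|)$. $T$ is a $2$-isometry if $\|x\|^2-2\|Tx\|^2+\|T^2x\|^2=0$ for all $x\in H$. *)

(* Operators on l^2(N; C) are modelled as maps on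
   all complex sequences; only their behaviour on square-summable sequences matters. *)
From Stdlib Require Import Reals.
From Coquelicot Require Import Coquelicot.
Open Scope R_scope.

Definition vec := nat -> C.
Definition op := vec -> vec.

Definition l2 (x : vec) : Prop := ex_series (fun n => (Cmod (x n)) ^ 2).
Definition nrm2 (x : vec) : R := Series (fun n => (Cmod (x n)) ^ 2).
Definition inner (x y : vec) : C :=
  (Series (fun n => Re (Cmult (x n) (Cconj (y n)))),
   Series (fun n => Im (Cmult (x n) (Cconj (y n))))).

Definition op_eq (A B : op) : Prop :=
  forall x, l2 x -> forall n, A x n = B x n.

Definition is_bounded_op (A : op) : Prop :=
  (forall x, l2 x -> l2 (A x)) /\
  (forall (x y : vec) (c : C), l2 x -> l2 y -> forall n,
      A (fun k => Cplus (x k) (Cmult c (y k))) n = Cplus (A x n) (Cmult c (A y n))) /\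
  (exists M : R, forall x, l2 x -> nrm2 (A x) <= M * nrm2 x).

Definition is_adjoint (A S : op) : Prop :=
  is_bounded_op S /\
  forall x y, l2 x -> l2 y -> inner (A x) y = inner x (S y).

Definition is_positive (P : op) : Prop :=
  is_bounded_op P /\
  forall x, l2 x -> Im (inner (P x) x) = 0 /\ 0 <= Re (inner (P x) x).

Definition is_pos_sqrt (P Q : op) : Prop :=
  is_positive Q /\ op_eq (fun x => Q (Q x)) P.

Definition is_modulus (T P : op) : Prop :=
  exists S, is_adjoint T S /\ is_pos_sqrt (fun x => S (T x)) P.

Definition in_ker (A : op) (x : vec) : Prop := l2 x /\ forall n, A x n = 0.

Definition is_polar_decomposition (T P V : op) : Prop :=
  is_bounded_op T /\
  is_modulus T P /\
  is_bounded_op V /\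
  (forall x, in_ker V x <-> in_ker T x) /\
  (forall x, l2 x -> (forall y, in_ker V y -> inner x y = 0) -> nrm2 (V x) = nrm2 x) /\
  op_eq T (fun x => V (P x)).

(* Aluthge transform |T|^{1/2} V |T|^{1/2}, given Q = |T|^{1/2} *)
Definition aluthge (Q V : op) : op := fun x => Q (V (Q x)).
(* mean transform (|T|V + V|T|)/2, given P = |T| *)
Definition mean_tr (P V : op) : op :=
  fun x n => Cmult (Cplus (P (V x) n) (V (P x) n)) (RtoC (/ 2)).

Definition two_isometry (T : op) : Prop :=
  forall x, l2 x -> nrm2 x - 2 * nrm2 (T x) + nrm2 (T (T x)) = 0.
Definition isometry (T : op) : Prop :=
  forall x, l2 x -> nrm2 (T x) = nrm2 x.

(* weighted shift T e_j = a_j e_{j+1}, basis indexed from 0 *)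
Definition weighted_shift (a : nat -> C) : op :=
  fun x n => match n with O => RtoC 0 | S k => Cmult (a k) (x k) end.

Definition bounded_seq (a : nat -> C) : Prop := exists M : R, forall j, Cmod (a j) <= M.

From Stdlib Require Import Reals Lra Psatz FunctionalExtensionality.
From Coquelicot Require Import Coquelicot.
Open Scope R_scope.

(* On the canonical basis [T^* T] is diagonal with entries [|a_j|^2]; a positive operator
   that squares to [c^2] on a vector acts there as [c], so [|T|] and [|T|^(1/2)] are
   diagonal with entries [|a_j|] and [|a_j|^(1/2)], [V e_j = (a_j/|a_j|) e_(j+1)], and
   [Delta(T)] is a weighted shift with weights of modulus [(|a_j| |a_(j+1)|)^(1/2)].
   A weighted shift with weights [w_j] is a 2-isometry exactly when
   [1 - 2|w_j|^2 + |w_j|^2 |w_(j+1)|^2 = 0]; the recurrences for [T] and [Delta(T)]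
   together force [|a_j| = 1].  Then [T^* T = I], hence [|T| = |T|^(1/2) = I] and
   [V = T]. *)

Definition single (c : C) (m : nat) : vec := fun n => if Nat.eqb n m then c else RtoC 0.

Lemma sum_n_single (f : nat -> R) m : (forall n, n <> m -> f n = 0) ->
  forall N, sum_n f N = if Nat.ltb N m then 0 else f m.
Proof.
  intros Hf N; induction N as [|N IH].
  - rewrite sum_O; destruct m as [|m]; simpl; [reflexivity|apply Hf; lia].
  - rewrite sum_Sn, IH; unfold plus; simpl.
    destruct (Nat.ltb_spec N m), (Nat.ltb_spec (S N) m).
    + rewrite Hf by lia; ring.
    + replace m with (S N) by lia; ring.
    + lia.
    + rewrite (Hf (S N)) by lia; ring.
Qed.

Lemma is_series_single (f : nat -> R) m :
  (forall n, n <> m -> f n = 0) -> is_series f (f m).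
Proof.
  intros Hf; unfold is_series.
  apply filterlim_ext_loc with (f := fun _ => f m); [|apply filterlim_const].
  exists m; intros N HN; symmetry.
  etransitivity; [apply (sum_n_single f m Hf N)|].
  destruct (Nat.ltb_spec N m); [lia|reflexivity].
Qed.

Lemma Series_single (f : nat -> R) m :
  (forall n, n <> m -> f n = 0) -> Series f = f m.
Proof. intros Hf; apply is_series_unique, is_series_single, Hf. Qed.

Lemma Series_nonneg_le0_eq0 (f : nat -> R) k :
  ex_series f -> (forall n, 0 <= f n) -> Series f <= 0 -> f k = 0.
Proof.
  intros Hf Hpos Hle.
  set (g := fun n => if Nat.eqb n k then f k else 0).
  assert (Hg : Series g = f k).
  { rewrite (Series_single g k); unfold g.
    - now rewrite Nat.eqb_refl.
    - intros n Hn; apply Nat.eqb_neq in Hn; now rewrite Hn. }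
  assert (Series g <= Series f).
  { apply Series_le; auto; intros n; unfold g.
    destruct (Nat.eqb_spec n k); [subst; split; [auto|lra]|split; [lra|auto]]. }
  specialize (Hpos k); lra.
Qed.

Lemma single_off c m n : n <> m -> single c m n = RtoC 0.
Proof. intros Hn; unfold single; apply Nat.eqb_neq in Hn; now rewrite Hn. Qed.

Lemma single_on c m : single c m m = c.
Proof. unfold single; now rewrite Nat.eqb_refl. Qed.

Lemma is_series_Cmod_single c m :
  is_series (fun n => Cmod (single c m n) ^ 2) (Cmod c ^ 2).
Proof.
  pose proof (is_series_single (fun n => Cmod (single c m n) ^ 2) m) as H.
  cbv beta in H; rewrite single_on in H; apply H.
  intros n Hn; rewrite single_off, Cmod_0 by exact Hn; ring.
Qed.

Lemma l2_single c m : l2 (single c m).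
Proof. exists (Cmod c ^ 2); apply is_series_Cmod_single. Qed.

Lemma nrm2_single c m : nrm2 (single c m) = Cmod c ^ 2.
Proof. apply is_series_unique, is_series_Cmod_single. Qed.

Lemma inner_single_l c m y : inner (single c m) y = (c * Cconj (y m))%C.
Proof.
  unfold inner; rewrite (Series_single _ m), (Series_single (fun n => Im _) m).
  - rewrite single_on; now destruct (c * Cconj (y m))%C.
  - intros n Hn; rewrite single_off by exact Hn; simpl; ring.
  - intros n Hn; rewrite single_off by exact Hn; simpl; ring.
Qed.

Lemma l2_zero : l2 (fun _ => RtoC 0).
Proof.
  replace (fun _ : nat => RtoC 0) with (single 0 0); [apply l2_single|].
  apply functional_extensionality; intros n; unfold single; now destruct (Nat.eqb n 0).
Qed.

Lemma l2_lincomb x y c : l2 x -> l2 y -> l2 (fun k => (x k + c * y k)%C).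
Proof.
  intros Hx Hy.
  apply (ex_series_le (V := R_CompleteNormedModule) _
           (fun n => 2 * Cmod (x n) ^ 2 + (2 * Cmod c ^ 2) * Cmod (y n) ^ 2)).
  - intros n; unfold norm; simpl; unfold abs; simpl.
    rewrite Rabs_pos_eq by apply pow2_ge_0.
    pose proof (Cmod_triangle (x n) (c * y n)) as Htri; rewrite Cmod_mult in Htri.
    pose proof (Cmod_ge_0 (x n + c * y n)).
    pose proof (Cmod_ge_0 (x n)); pose proof (Cmod_ge_0 c); pose proof (Cmod_ge_0 (y n)).
    set (z := Cmod (x n + c * y n)%C) in *.
    set (X := Cmod (x n)) in *; set (Y := Cmod (y n)) in *; set (K := Cmod c) in *.
    assert (z * z <= (X + K * Y) * (X + K * Y)) by (apply Rmult_le_compat; lra).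
    pose proof (Rle_0_sqr (X - K * Y)); unfold Rsqr in *; simpl; nra.
  - apply (ex_series_plus (fun n => 2 * Cmod (x n) ^ 2)
                          (fun n => (2 * Cmod c ^ 2) * Cmod (y n) ^ 2));
      apply (ex_series_scal_l (V := R_NormedModule)); assumption.
Qed.

Lemma nrm2_ge0 x : l2 x -> 0 <= nrm2 x.
Proof.
  intros Hx; unfold nrm2; rewrite <- (Series_single (fun _ => 0) 0) by reflexivity.
  apply Series_le; auto; intros n; split; [lra|apply pow2_ge_0].
Qed.

Section BoundedOp.
Variable A : op.
Hypothesis A_bounded : is_bounded_op A.

Lemma bounded_op_zero n : A (fun _ => RtoC 0) n = RtoC 0.
Proof.
  destruct A_bounded as [_ [Hlin _]].
  pose proof (Hlin _ _ 1%C l2_zero l2_zero n) as H; cbv beta in H.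
  replace (fun _ : nat => (0 + 1 * 0)%C) with (fun _ : nat => RtoC 0) in H
    by (apply functional_extensionality; intros; ring).
  set (z := A (fun _ => RtoC 0) n) in *.
  transitivity ((z + 1 * z) - z)%C; [ring|rewrite <- H; ring].
Qed.

Lemma bounded_op_scale y c n : l2 y -> A (fun k => (c * y k)%C) n = (c * A y n)%C.
Proof.
  intros Hy; destruct A_bounded as [_ [Hlin _]].
  pose proof (Hlin _ y c l2_zero Hy n) as H; cbv beta in H.
  replace (fun k : nat => (0 + c * y k)%C) with (fun k => (c * y k)%C) in H
    by (apply functional_extensionality; intros; ring).
  rewrite H, bounded_op_zero; ring.
Qed.

Lemma bounded_op_single_mult c d m :
  A (single (c * d) m) = (fun n => (c * A (single d m) n)%C).
Proof.
  apply functional_extensionality; intros n.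
  rewrite <- bounded_op_scale by apply l2_single; f_equal.
  apply functional_extensionality; intros k; unfold single; destruct (Nat.eqb k m); ring.
Qed.

Lemma bounded_op_basis c m d m' :
  A (single 1 m) = single d m' -> A (single c m) = single (c * d) m'.
Proof.
  intros Hd; replace c with (c * 1)%C at 1 by ring.
  rewrite bounded_op_single_mult, Hd.
  apply functional_extensionality; intros n; unfold single; destruct (Nat.eqb n m'); ring.
Qed.

End BoundedOp.

(* If [y := A v - c v], then [A y = - c y], and positivity of [A] forces [y = 0]. *)
Lemma positive_op_sqrt_eigen (A : op) (c : R) (v : vec) :
  is_positive A -> 0 < c -> l2 v ->
  (forall k, A (A v) k = (c * c * v k)%C) -> forall k, A v k = (c * v k)%C.
Proof.
  intros [HA Hpos] Hc Hv Hsq k.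
  set (y := fun k => (A v k + (- c) * v k)%C).
  assert (Hy : l2 y) by (apply l2_lincomb; [apply (proj1 HA)|]; exact Hv).
  assert (HAy : forall n, A y n = ((- c) * y n)%C).
  { intros n; destruct HA as [Hl2 [Hlin _]]; unfold y.
    rewrite Hlin, Hsq by (try apply Hl2; exact Hv); ring. }
  destruct (Hpos y Hy) as [_ Hre]; unfold inner, Re in Hre; cbn [fst] in Hre.
  rewrite (Series_ext _ (fun n => (- c) * (Cmod (y n) ^ 2))) in Hre.
  2: { intros n; rewrite HAy, Cmod2_alt; destruct (y n); simpl; ring. }
  rewrite Series_scal_l in Hre; fold (nrm2 y) in Hre.
  pose proof (nrm2_ge0 y Hy).
  assert (Hy0 : Cmod (y k) ^ 2 = 0).
  { apply (Series_nonneg_le0_eq0 (fun n => Cmod (y n) ^ 2)); auto.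
    - intros n; apply pow2_ge_0.
    - fold (nrm2 y); nra. }
  assert (Hyk : y k = RtoC 0) by (apply Cmod_eq_0; nra).
  unfold y in Hyk.
  transitivity ((A v k + - c * v k) + c * v k)%C; [ring|rewrite Hyk; ring].
Qed.

Definition diagonal_on_basis (A : op) (d : nat -> C) : Prop :=
  forall c m, A (single c m) = single (c * d m) m.

Definition shift_on_basis (A : op) (w : nat -> C) : Prop :=
  forall c m, A (single c m) = single (c * w m) (S m).

Lemma weighted_shift_on_basis a : shift_on_basis (weighted_shift a) a.
Proof.
  intros c m; apply functional_extensionality; intros [|n]; unfold single; simpl;
    [reflexivity|].
  destruct (Nat.eqb_spec n m); [subst; ring|ring].
Qed.

Lemma two_isometry_shift_weights A w : shift_on_basis A w -> two_isometry A ->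
  forall j, 1 - 2 * Cmod (w j) ^ 2 + Cmod (w j) ^ 2 * Cmod (w (S j)) ^ 2 = 0.
Proof.
  intros Hw H2 j; pose proof (H2 _ (l2_single 1 j)) as H.
  rewrite !Hw, !nrm2_single, !Cmod_mult, Cmod_1 in H; nra.
Qed.

Lemma two_isometry_shift_weights_pos A w : shift_on_basis A w -> two_isometry A ->
  forall j, 0 < Cmod (w j).
Proof.
  intros Hw H2 j; pose proof (two_isometry_shift_weights A w Hw H2 j) as H.
  destruct (Cmod_ge_0 (w j)) as [|Hj]; [assumption|rewrite <- Hj in H; lra].
Qed.

Lemma adjoint_weighted_shift a Sa : is_adjoint (weighted_shift a) Sa ->
  forall y, l2 y -> forall k, Sa y k = (Cconj (a k) * y (S k))%C.
Proof.
  intros [_ Had] y Hy k.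
  pose proof (Had (single 1 k) y (l2_single _ _) Hy) as H.
  rewrite weighted_shift_on_basis, !inner_single_l in H.
  apply (f_equal Cconj) in H; rewrite !Cmult_conj, !Cconj_conj in H.
  replace (Cconj 1) with (RtoC 1) in H by (apply injective_projections; simpl; ring).
  rewrite !Cmult_1_l in H; now symmetry.
Qed.

Lemma adjoint_weighted_shift_comp a Sa x : is_bounded_op (weighted_shift a) ->
  is_adjoint (weighted_shift a) Sa -> l2 x ->
  forall k, Sa (weighted_shift a x) k = (Cmod (a k) ^ 2 * x k)%C.
Proof.
  intros HT Had Hx k; rewrite (adjoint_weighted_shift a Sa Had) by (apply (proj1 HT), Hx).
  unfold weighted_shift; rewrite <- RtoC_pow, Cmod2_conj; ring.
Qed.

Definition aluthge_weight (a : nat -> C) (j : nat) : C :=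
  (sqrt (Cmod (a j)) * (a j / Cmod (a j)) * sqrt (Cmod (a (S j))))%C.

Lemma Cmod_aluthge_weight a j : 0 < Cmod (a j) -> 0 < Cmod (a (S j)) ->
  Cmod (aluthge_weight a j) ^ 2 = Cmod (a j) * Cmod (a (S j)).
Proof.
  intros H0 H1; unfold aluthge_weight.
  assert (Hnz : RtoC (Cmod (a j)) <> 0%C) by (intros E; apply RtoC_inj in E; lra).
  rewrite !Cmod_mult, Cmod_div, !Cmod_R, !Rabs_pos_eq by (auto using sqrt_pos; lra).
  pose proof (sqrt_sqrt _ (Rlt_le _ _ H0)); pose proof (sqrt_sqrt _ (Rlt_le _ _ H1)).
  field_simplify; [nra|lra].
Qed.

(* With [s := p0^2], [x := p0 p1], [y := p1 p2] the hypotheses give [x^2 = 2s - 1],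
   [s y^2 = 3s - 2] and [x y = 2x - 1]; eliminating [x] and [y] leaves [(s - 1)^4 = 0]. *)
Lemma unimodular_of_weight_recurrences (p0 p1 p2 : R) : 0 < p0 -> 0 < p1 -> 0 < p2 ->
  1 - 2 * p0 ^ 2 + p0 ^ 2 * p1 ^ 2 = 0 ->
  1 - 2 * p1 ^ 2 + p1 ^ 2 * p2 ^ 2 = 0 ->
  1 - 2 * (p0 * p1) + (p0 * p1) * (p1 * p2) = 0 -> p0 = 1.
Proof.
  intros H0 H1 H2 E0 E1 F.
  set (s := p0 * p0); set (x := p0 * p1); set (y := p1 * p2).
  assert (Hx : x * x = 2 * s - 1) by (unfold x, s; nra).
  assert (Hy : s * (y * y) = 3 * s - 2).
  { unfold s, y.
    replace (p0 * p0 * (p1 * p2 * (p1 * p2))) with (p0 ^ 2 * (p1 ^ 2 * p2 ^ 2)) by ring.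
    replace (p1 ^ 2 * p2 ^ 2) with (2 * p1 ^ 2 - 1) by lra.
    replace (p0 ^ 2 * (2 * p1 ^ 2 - 1)) with (2 * (p0 ^ 2 * p1 ^ 2) - p0 ^ 2) by ring.
    replace (p0 ^ 2 * p1 ^ 2) with (2 * p0 ^ 2 - 1) by lra; ring. }
  assert (Hxy : x * y = 2 * x - 1) by (unfold x, y in *; lra).
  assert (Hsx : 2 * s * x = s * s + 2 * s - 1).
  { assert (E : (x * x) * (s * (y * y)) = s * ((x * y) * (x * y))) by ring.
    rewrite Hx, Hy, Hxy in E; nra. }
  assert (Hs : (s - 1) ^ 4 = 0).
  { assert (E : (2 * s * x) * (2 * s * x) = 4 * s * s * (x * x)) by ring.
    rewrite Hsx, Hx in E; nra. }
  destruct (Req_dec (s - 1) 0) as [Hs1|Hne]; [unfold s in Hs1; nra|].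
  exfalso; exact (pow_nonzero _ 4 Hne Hs).
Qed.

Section PolarDecomposition.
Variables (a : nat -> C) (Sa P V Q : op).
Hypotheses (T_bounded : is_bounded_op (weighted_shift a))
  (T_adjoint : is_adjoint (weighted_shift a) Sa)
  (P_modulus : is_pos_sqrt (fun x => Sa (weighted_shift a x)) P)
  (V_bounded : is_bounded_op V)
  (T_polar : op_eq (weighted_shift a) (fun x => V (P x)))
  (Q_sqrt : is_pos_sqrt P Q).

Lemma modulus_on_basis : (forall j, 0 < Cmod (a j)) ->
  diagonal_on_basis P (fun j => RtoC (Cmod (a j))).
Proof.
  intros Hpos c j; apply (bounded_op_basis P (proj1 (proj1 P_modulus))).
  apply functional_extensionality; intros k.
  rewrite (positive_op_sqrt_eigen P _ _ (proj1 P_modulus) (Hpos j) (l2_single 1 j)).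
  - unfold single; destruct (Nat.eqb k j); ring.
  - intros k'; rewrite (proj2 P_modulus _ (l2_single 1 j) k').
    rewrite adjoint_weighted_shift_comp by auto using l2_single.
    unfold single; destruct (Nat.eqb_spec k' j); [subst|]; simpl; ring.
Qed.

Lemma modulus_sqrt_on_basis : (forall j, 0 < Cmod (a j)) ->
  diagonal_on_basis Q (fun j => RtoC (sqrt (Cmod (a j)))).
Proof.
  intros Hpos c j; apply (bounded_op_basis Q (proj1 (proj1 Q_sqrt))).
  apply functional_extensionality; intros k.
  rewrite (positive_op_sqrt_eigen Q _ _ (proj1 Q_sqrt) (sqrt_lt_R0 _ (Hpos j)) (l2_single 1 j)).
  - unfold single; destruct (Nat.eqb k j); ring.
  - intros k'; rewrite (proj2 Q_sqrt _ (l2_single 1 j) k'), (modulus_on_basis Hpos).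
    rewrite <- (RtoC_mult (sqrt _)), sqrt_sqrt by (apply Rlt_le, Hpos).
    unfold single; destruct (Nat.eqb k' j); ring.
Qed.

Lemma partial_isometry_on_basis : (forall j, 0 < Cmod (a j)) ->
  shift_on_basis V (fun j => (a j / Cmod (a j))%C).
Proof.
  intros Hpos c j.
  assert (Hnz : RtoC (Cmod (a j)) <> 0%C)
    by (intros E; apply RtoC_inj in E; specialize (Hpos j); lra).
  assert (HV : V (single (Cmod (a j)) j) = single (a j) (S j)).
  { apply functional_extensionality; intros n.
    rewrite <- (Cmult_1_l (Cmod (a j))), <- (modulus_on_basis Hpos), <- T_polar
      by apply l2_single.
    rewrite weighted_shift_on_basis, Cmult_1_l; reflexivity. }
  replace c with (c / Cmod (a j) * Cmod (a j))%C at 1 by (field; exact Hnz).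
  rewrite (bounded_op_single_mult V V_bounded), HV.
  apply functional_extensionality; intros n; unfold single; destruct (Nat.eqb n (S j));
    [field; exact Hnz|ring].
Qed.

Lemma aluthge_on_basis : (forall j, 0 < Cmod (a j)) ->
  shift_on_basis (aluthge Q V) (aluthge_weight a).
Proof.
  intros Hpos c j; unfold aluthge.
  rewrite (modulus_sqrt_on_basis Hpos), (partial_isometry_on_basis Hpos),
    (modulus_sqrt_on_basis Hpos).
  unfold aluthge_weight; f_equal; ring.
Qed.

Lemma shift_weights_unimodular : two_isometry (weighted_shift a) ->
  two_isometry (aluthge Q V) -> forall j, Cmod (a j) = 1.
Proof.
  intros H2T H2D j.
  pose proof (weighted_shift_on_basis a) as Ha.
  pose proof (two_isometry_shift_weights_pos _ _ Ha H2T) as Hpos.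
  pose proof (two_isometry_shift_weights _ _ Ha H2T) as E.
  pose proof (two_isometry_shift_weights _ _ (aluthge_on_basis Hpos) H2D j) as F.
  rewrite !Cmod_aluthge_weight in F by apply Hpos.
  exact (unimodular_of_weight_recurrences _ _ _ (Hpos j) (Hpos (S j)) (Hpos (S (S j)))
           (E j) (E (S j)) F).
Qed.

Section Unimodular.
Hypothesis a_unimodular : forall j, Cmod (a j) = 1.

Lemma modulus_id x : l2 x -> P x = x.
Proof.
  intros Hx; apply functional_extensionality; intros k.
  rewrite (positive_op_sqrt_eigen P 1 x (proj1 P_modulus) Rlt_0_1 Hx); [ring|].
  intros k'; rewrite (proj2 P_modulus x Hx k'), adjoint_weighted_shift_comp by auto.
  rewrite a_unimodular; ring.
Qed.

Lemma modulus_sqrt_id x : l2 x -> Q x = x.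
Proof.
  intros Hx; apply functional_extensionality; intros k.
  rewrite (positive_op_sqrt_eigen Q 1 x (proj1 Q_sqrt) Rlt_0_1 Hx); [ring|].
  intros k'; rewrite (proj2 Q_sqrt x Hx k'), modulus_id by exact Hx; ring.
Qed.

Lemma partial_isometry_eq_shift x : l2 x -> V x = weighted_shift a x.
Proof.
  intros Hx; apply functional_extensionality; intros n.
  rewrite (T_polar x Hx n), modulus_id by exact Hx; reflexivity.
Qed.

End Unimodular.
End PolarDecomposition.

Lemma weighted_shift_isometry a : (forall j, Cmod (a j) = 1) ->
  isometry (weighted_shift a).
Proof.
  intros Ha x Hx; unfold nrm2.
  assert (Hshift : forall k, Cmod (weighted_shift a x (S k)) ^ 2 = Cmod (x k) ^ 2)
    by (intros k; simpl; rewrite Cmod_mult, Ha; ring).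
  rewrite Series_incr_1.
  - rewrite (Series_ext _ _ Hshift); simpl; rewrite Cmod_0; ring.
  - apply ex_series_incr_1, (ex_series_ext _ _ (fun k => eq_sym (Hshift k)) Hx).
Qed.

Theorem mainTheorem13 (a : nat -> C) (P V Q : op) :
  bounded_seq a ->
  is_polar_decomposition (weighted_shift a) P V ->
  is_pos_sqrt P Q ->
  two_isometry (weighted_shift a) ->
  two_isometry (aluthge Q V) ->
  isometry (weighted_shift a) /\
  op_eq (weighted_shift a) (aluthge Q V) /\
  op_eq (weighted_shift a) (mean_tr P V).
Proof.
  intros _ [HT [[Sa [Hadj HP]] [HV [_ [_ Hpolar]]]]] HQ H2T H2D.
  pose proof (shift_weights_unimodular a Sa P V Q HT Hadj HP HV Hpolar HQ H2T H2D) as Ha.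
  pose proof (modulus_id a Sa P HT Hadj HP Ha) as HPid.
  pose proof (modulus_sqrt_id a Sa P Q HT Hadj HP HQ Ha) as HQid.
  pose proof (partial_isometry_eq_shift a Sa P V HT Hadj HP Hpolar Ha) as HVT.
  split; [|split].
  - exact (weighted_shift_isometry a Ha).
  - intros x Hx n; unfold aluthge.
    rewrite (HQid x Hx), (HVT x Hx), (HQid _ (proj1 HT x Hx)); reflexivity.
  - intros x Hx n; unfold mean_tr.
    rewrite (HPid x Hx), (HVT x Hx), (HPid _ (proj1 HT x Hx)).
    destruct (weighted_shift a x n) as [u w]; apply injective_projections; simpl; field.
Qed.
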